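(* Let $G$ be a finite group. Then: (a) $\nu_1(G) = \Phi(F(G)) \leq \Phi(G)$; (b) $\nu_i(G)$ is a characteristic subgroup of $G$ for every $i \geq 0$; (c) $\nu_j(G/\nu_i(G)) = \nu_j(G)/\nu_i(G)$ for all integers $i,j$ with $i \geq j \geq 0$ and $i \geq 1$.
   Context: For a finite group $G$, $F(G)$ denotes its Fitting subgroup and $\Phi(G)$ its Frattini subgroup. The $F$-central series of $G$ is defined by $\nu_0(G)=F(G)$ and, for $i\ge 0$, $\nu_{i+1}(G)$ is the smallest normal subgroup $N$ of $F(G)$ with $N\le \nu_i(G)$ such that $\nu_i(G)/N$ is centralized by $F(G)$ and is a direct product of elementary abelian groups. *)

From HB Require Import structures.
From mathcomp Require Import all_boot all_fingroup all_solvable.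
Set Implicit Arguments. Unset Strict Implicit. Unset Printing Implicit Defensive.
Local Open Scope group_scope.

(* A is a direct product of elementary abelian groups: A is the (internal)
   direct product of its p-cores 'O_p(A), p ranging over the primes of #|A|,
   and each of these factors is an elementary abelian p-group. *)
Definition elem_abelian_prod (gT : finGroupType) (A : {set gT}) : bool :=
  (A == \big[dprod/1]_(p <- primes #|A|) 'O_p(A))
  && all (fun p => p.-abelem 'O_p(A)) (primes #|A|).

(* Admissible N for one step of the F-central series, with F = F(G) and
   V = nu_i(G): N normal in F, N <= V, V/N centralized by F, and V/N a
   direct product of elementary abelian groups. *)
Definition Fcentral_step_ok (gT : finGroupType) (F V N : {set gT}) : bool :=
  [&& N <| F, N \subset V, (F / N) \subset 'C(V / N)
    & elem_abelian_prod (V / N)].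

(* nu_{i+1} = smallest such N = intersection of all admissible N. *)
Fixpoint Fcentral_rec (gT : finGroupType) (F : {set gT}) (i : nat) : {set gT} :=
  match i with
  | 0 => F
  | i'.+1 => let V := Fcentral_rec F i' in
             \bigcap_(N : {group gT} | Fcentral_step_ok F V N) N
  end.

Definition nu (gT : finGroupType) (i : nat) (G : {set gT}) : {set gT} :=
  Fcentral_rec 'F(G) i.

From HB Require Import structures.
From mathcomp Require Import all_boot all_fingroup all_solvable.
Set Implicit Arguments. Unset Strict Implicit. Unset Printing Implicit Defensive.
Local Open Scope group_scope.

(* Write F = F(G).  The key observation is that for a nilpotent F and a normal
   subgroup V of F, a normal subgroup N of F contained in V is admissible for
   one step of the series exactly when [F, V] <= N and Phi(V) <= N: the first
   condition says that F centralizes V/N, the second that the nilpotent group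
   V/N has trivial Frattini subgroup, i.e. is a direct product of elementary
   abelian groups.  Hence nu_{i+1}(G) = [F, nu_i(G)] Phi(nu_i(G)), and the
   series coincides with the explicit recursion Fcentral_series. *)

Section FrattiniSubgroup.
Variable gT : finGroupType.
Implicit Types G H K M P : {group gT}.

Lemma maximal_joinE M G H :
  maximal M G -> H \subset G -> ~~ (H \subset M) -> M <*> H = G.
Proof.
case/maxgroupP=> /proper_sub sMG maxM sHG not_sHM.
apply/eqP; rewrite eqEproper join_subG sMG sHG /=.
by apply: contra not_sHM => /maxM <-; rewrite ?joing_subl ?joing_subr.
Qed.

(* The Frattini subgroup of a normal subgroup lies in the Frattini subgroup:
   otherwise some maximal M gives G = M Phi(H), hence H = (H :&: M) Phi(H) and
   H <= M by the non-generator property of Phi(H). *)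
Lemma Phi_normal_sub H G : H <| G -> 'Phi(H) \subset 'Phi(G).
Proof.
case/andP=> sHG nHG; have nPhiG : G \subset 'N('Phi(H)) := gFnorm_trans _ nHG.
apply/bigcapsP=> M /predU1P[-> | maxM]; first exact: gFsub_trans.
apply: contraT => not_sPhiM.
have defG := maximal_joinE maxM (gFsub_trans _ sHG) not_sPhiM.
have nPhiM : M \subset 'N('Phi(H)) := subset_trans (proper_sub (maxgroupp maxM)) nPhiG.
have defH : 'Phi(H) <*> (H :&: M) = H.
  rewrite joingC norm_joinEl ?(subset_trans (subsetIr _ _)) //.
  rewrite group_modr ?Phi_sub // -norm_joinEl //.
  by rewrite defG; apply/setIidPl.
have sHM : H \subset M by rewrite -(Phi_nongen defH) gen_subG subsetIr.
by case/negP: not_sPhiM; apply: subset_trans (Phi_sub H) sHM.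
Qed.

(* Frattini argument modulo Phi(G): if K <| G is covered by M P with
   M <= Phi(G) and P a Sylow subgroup of K, then G = Phi(G) N_G(P), so P <| G. *)
Lemma Sylow_normal_Frattini p G K M P :
  K <| G -> p.-Sylow(K) P -> M \subset 'Phi(G) -> K \subset M * P -> P <| G.
Proof.
move=> nsKG sylP sMPhi sKMP; have sPG := subset_trans (pHall_sub sylP) (normal_sub nsKG).
have sPN : P \subset 'N_G(P) by rewrite subsetI sPG normG.
have defG : 'Phi(G) <*> 'N_G(P) = G.
  apply/eqP; rewrite eqEsubset join_subG Phi_sub subsetIl /=.
  rewrite -{1}(Frattini_arg nsKG sylP) (subset_trans (mulSg _ sKMP)) //.
  rewrite -mulgA (mulSGid sPN) (subset_trans (mulSg _ sMPhi)) //.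
  by rewrite mul_subG ?joing_subl ?joing_subr.
by rewrite /normal sPG -{1}(Phi_nongen defG) gen_subG subsetIr.
Qed.

(* Gaschuetz: factoring out a normal subgroup of Phi(G) commutes with taking
   the Fitting subgroup; each Sylow subgroup of the preimage of F(G/M) is
   normal in G by the previous lemma, hence lies in F(G). *)
Lemma Fitting_quotient_Phi G M :
  M <| G -> M \subset 'Phi(G) -> 'F(G / M) = 'F(G) / M.
Proof.
move=> nsMG sMPhi; have nMG := normal_norm nsMG.
apply/eqP; rewrite eqEsubset andbC Fitting_max ?quotient_normal ?quotient_nil
  ?Fitting_normal ?Fitting_nil //=.
pose L := (coset M @*^-1 'F(G / M))%G.
have nsLG : L <| G by rewrite -(quotientGK nsMG) cosetpre_normal Fitting_normal.
have defLM : L / M = 'F(G / M) by rewrite cosetpreK.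
rewrite -defLM quotientS // -(Sylow_gen L) gen_subG.
apply/bigcupsP=> P /SylowP[p _ sylP]; apply: Fitting_max; last first.
  exact: pgroup_nil (pHall_pgroup sylP).
have sPL := pHall_sub sylP.
have nMP : P \subset 'N(M) := subset_trans sPL (subset_trans (normal_sub nsLG) nMG).
have defPM : P / M = 'O_p(L / M).
  apply: nilpotent_Hall_pcore (quotient_pHall nMP sylP).
  by rewrite /= defLM Fitting_nil.
pose K := (coset M @*^-1 (P / M))%G.
have nsKG : K <| G.
  rewrite -(quotientGK nsMG) cosetpre_normal /= defPM.
  by apply: char_normal_trans (pcore_char _ _) _; rewrite /= defLM Fitting_normal.
have sylK : p.-Sylow(K) P.
  apply: pHall_subl sylP; first by rewrite -sub_quotient_pre.
  by apply: morphpreS; rewrite /= -defLM quotientS.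
by apply: Sylow_normal_Frattini nsKG sylK sMPhi _; rewrite /= quotientK.
Qed.

End FrattiniSubgroup.

Section NilpotentFrattini.
Variable gT : finGroupType.
Implicit Types A G H K M P V X : {group gT}.

Lemma nilpotent_sub_pcores X H :
  nilpotent X -> (forall p : nat, 'O_p(X) \subset H) -> X \subset H.
Proof.
move=> nilX sXpH; rewrite -(nilpotent_Fitting nilX) FittingEgen gen_subG.
by apply/bigcupsP=> p _; apply: sXpH.
Qed.

(* In V = P \x K with P a p-group, a maximal subgroup M of P yields the
   maximal subgroup M K of V (it has index p). *)
Lemma maximal_dprod_joinr (p : nat) P K V M :
  P \x K = V -> p.-group P -> maximal M P -> maximal (M <*> K) V.
Proof.
case/dprodP=> _ defV cPK tiPK pP maxM.
have sMP : M \subset P := proper_sub (maxgroupp maxM).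
have nKM : M \subset 'N(K) by rewrite (subset_trans sMP) // cents_norm // centsC.
have tiMK : M :&: K = 1 by apply/trivgP; rewrite -tiPK setSI.
have ntP : P :!=: 1.
  by apply: contraTneq (maxgroupp maxM) => ->; rewrite properE sub1G andbF.
have [pr_p _ _] := pgroup_pdiv pP ntP.
have sMKV : M <*> K \subset V.
  by rewrite join_subG -defV (subset_trans sMP (mulG_subl _ _)) mulG_subr.
have cardMK : #|M <*> K| = (#|M| * #|K|)%N by rewrite norm_joinEl // TI_cardMg.
have indexMK : #|V : M <*> K| = p.
  rewrite -divgS // cardMK -defV TI_cardMg // divnMr ?cardG_gt0 //.
  by rewrite divgS // (p_maximal_index pP maxM).
by apply: p_index_maximal sMKV _; rewrite indexMK.
Qed.

(* In a nilpotent V, the p-part of Phi(V) lies in Phi(O_p(V)): every maximal M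
   of O_p(V) gives the maximal subgroup M O_p'(V) of V, which meets O_p(V) in M. *)
Lemma pcore_Phi_sub (p : nat) V :
  nilpotent V -> 'O_p('Phi(V)) \subset 'Phi('O_p(V)).
Proof.
move=> nilV; have defV := nilpotent_pcoreC p nilV.
have sPhiVp : 'O_p('Phi(V)) \subset 'O_p(V).
  by rewrite pcore_max ?pcore_pgroup // gFnormal_trans ?Phi_normal.
apply/bigcapsP=> M /predU1P[-> // | maxM].
have sMP : M \subset 'O_p(V) := proper_sub (maxgroupp maxM).
have nKM : M \subset 'N('O_p^'(V)).
  exact: subset_trans sMP (subset_trans (pcore_sub _ _) (gFnorm _ _)).
have sPhiMK := Phi_sub_max (maximal_dprod_joinr defV (pcore_pgroup p V) maxM).
have [_ _ _ tiPK] := dprodP defV.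
have : 'O_p('Phi(V)) \subset 'O_p(V) :&: (M * 'O_p^'(V)).
  by rewrite subsetI sPhiVp -norm_joinEl // (subset_trans (pcore_sub _ _) sPhiMK).
by rewrite setIC -group_modl // setIC tiPK mulg1.
Qed.

Lemma Phi_nil_sub_pcores V H :
  nilpotent V -> (forall p : nat, 'Phi('O_p(V)) \subset H) -> 'Phi(V) \subset H.
Proof.
move=> nilV sPhiH; apply: nilpotent_sub_pcores (nilpotentS (Phi_sub V) nilV) _ => p.
exact: subset_trans (pcore_Phi_sub p nilV) (sPhiH p).
Qed.

Lemma elem_abelian_prodE A :
  nilpotent A -> elem_abelian_prod A = ('Phi(A) == 1).
Proof.
move=> nilA; rewrite /elem_abelian_prod -/(Fitting A) nilpotent_Fitting // eqxx /=.
apply/allP/idP=> [abelA | /eqP trPhi p _]; last first.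
  by rewrite -(trivg_Phi (pcore_pgroup p A)) -subG1 -trPhi Phi_normal_sub ?pcore_normal.
rewrite -subG1; apply: Phi_nil_sub_pcores nilA _ => p.
have [trivP | ntP] := eqVneq 'O_p(A) 1.
  by apply: subset_trans (Phi_sub _) _; apply/trivgP.
rewrite subG1 (trivg_Phi (pcore_pgroup p A)); apply: abelA.
have [pr_p p_dv_Op _] := pgroup_pdiv (pcore_pgroup p A) ntP.
by rewrite mem_primes pr_p cardG_gt0 (dvdn_trans p_dv_Op) ?cardSg ?pcore_sub.
Qed.

(* Maximal subgroups of nilpotent groups are normal (normalizers grow). *)
Lemma nilpotent_maximal_normal G M : nilpotent G -> maximal M G -> M <| G.
Proof.
move=> nilG maxM; have prMG := maxgroupp maxM.
have prMN := nilpotent_proper_norm nilG prMG.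
have := maximal_joinE maxM (subsetIl G _) (proper_subn prMN).
by rewrite (joing_idPr (proper_sub prMN)) /normal proper_sub // => <-; rewrite subsetIr.
Qed.

(* A nilpotent group has abelian (indeed cyclic) quotients by its maximal
   subgroups, so its derived subgroup lies in its Frattini subgroup. *)
Lemma der1_sub_Phi_nil G : nilpotent G -> G^`(1) \subset 'Phi(G).
Proof.
move=> nilG; apply/bigcapsP=> M /predU1P[-> | maxM]; first exact: der1_subG.
have nMG := normal_norm (nilpotent_maximal_normal nilG maxM).
have [_ [x Gx notMx]] := properP (maxgroupp maxM).
have defG : M <*> <[x]> = G by apply: maximal_joinE; rewrite ?cycle_subG.
have nMx : <[x]> \subset 'N(M) by rewrite cycle_subG (subsetP nMG).
by apply: der1_min nMG _; rewrite -defG quotientYidl // quotient_abelian ?cycle_abelian.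
Qed.

End NilpotentFrattini.

Section NilpotentQuotient.
Variable gT : finGroupType.
Implicit Types M V : {group gT}.

(* In a nilpotent group, p-cores are Sylow subgroups, so they commute with
   quotients. *)
Lemma quotient_pcore_nil (p : nat) V M :
  nilpotent V -> V \subset 'N(M) -> 'O_p(V) / M = 'O_p(V / M).
Proof.
move=> nilV nMV; apply: nilpotent_Hall_pcore (quotient_nil M nilV) _.
exact: quotient_pHall (subset_trans (pcore_sub _ _) nMV) (nilpotent_pcore_Hall p nilV).
Qed.

(* For nilpotent V, Phi(V/M) = Phi(V)/M: one inclusion holds for any group,
   the other reduces to the p-groups O_p(V). *)
Lemma quotient_Phi_nil V M :
  nilpotent V -> V \subset 'N(M) -> 'Phi(V) / M = 'Phi(V / M).
Proof.
move=> nilV nMV; apply/eqP; rewrite eqEsubset morphimF //=.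
apply: Phi_nil_sub_pcores (quotient_nil M nilV) _ => p.
have nMVp : 'O_p(V) \subset 'N(M) := subset_trans (pcore_sub _ _) nMV.
rewrite -(quotient_pcore_nil p nilV nMV) -(quotient_Phi (pcore_pgroup p V) nMVp).
by rewrite quotientS // Phi_normal_sub ?pcore_normal.
Qed.

End NilpotentQuotient.

Section FcentralStep.
Variable gT : finGroupType.
Implicit Types F N V : {group gT}.

Lemma Fcentral_step_okE F V N :
    nilpotent F -> V <| F ->
  Fcentral_step_ok F V N =
    [&& N <| F, N \subset V, [~: F, V] \subset N & 'Phi(V) \subset N].
Proof.
move=> nilF nsVF; rewrite /Fcentral_step_ok.
case nsNF: (N <| F) => //; case sNV: (N \subset V) => //=.
have nNF := normal_norm nsNF; have nNV := subset_trans (normal_sub nsVF) nNF.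
rewrite quotient_cents2 //; congr (_ && _).
have nilV := nilpotentS (normal_sub nsVF) nilF.
rewrite (elem_abelian_prodE (quotient_nil N nilV)) -(quotient_Phi_nil nilV nNV).
by rewrite -subG1 quotient_sub1 // (subset_trans (Phi_sub V) nNV).
Qed.

Lemma Fcentral_step_meet F V :
    nilpotent F -> V <| F ->
  \bigcap_(N : {group gT} | Fcentral_step_ok F V N) N = [~: F, V] <*> 'Phi(V).
Proof.
move=> nilF nsVF; have nsRF : [~: F, V] <| F.
  by have := commg_normal F V; rewrite (joing_idPl (normal_sub nsVF)).
have okW : Fcentral_step_ok F V ([~: F, V] <*> 'Phi(V))%G.
  rewrite Fcentral_step_okE //= normalY ?gFnormal_trans // joing_subl joing_subr.
  by rewrite join_subG Phi_sub commg_subr normal_norm.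
apply/eqP; rewrite eqEsubset bigcap_inf //=.
by apply/bigcapsP=> N; rewrite Fcentral_step_okE // join_subG => /and4P[_ _ ->].
Qed.

End FcentralStep.

Fixpoint Fcentral_series (gT : finGroupType) (F : {group gT}) (i : nat) : {group gT} :=
  if i is i'.+1 then
    ([~: F, Fcentral_series F i'] <*> 'Phi(Fcentral_series F i'))%G
  else F.

Section FcentralSeries.
Variable gT : finGroupType.
Implicit Types F G M : {group gT}.

Lemma Fcentral_series_normal F i : Fcentral_series F i <| F.
Proof.
elim: i => [|i IHi] /=; first exact: normal_refl.
rewrite normalY ?gFnormal_trans //.
by have := commg_normal F (Fcentral_series F i); rewrite (joing_idPl (normal_sub IHi)).
Qed.

Lemma Fcentral_series_subS F i : Fcentral_series F i.+1 \subset Fcentral_series F i.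
Proof.
by rewrite /= join_subG Phi_sub commg_subr normal_norm ?Fcentral_series_normal.
Qed.

Lemma Fcentral_series_sub F i j :
  j <= i -> Fcentral_series F i \subset Fcentral_series F j.
Proof.
elim: i => [|i IHi]; first by rewrite leqn0 => /eqP->.
rewrite leq_eqVlt ltnS => /predU1P[-> // | /IHi].
exact: subset_trans (Fcentral_series_subS F i).
Qed.

Lemma Fcentral_recE F i : nilpotent F -> Fcentral_rec F i = Fcentral_series F i.
Proof.
move=> nilF; elim: i => [|i IHi] //=.
by rewrite IHi Fcentral_step_meet ?Fcentral_series_normal.
Qed.

(* nu_1 = [F, F] Phi(F) = Phi(F), as F' <= Phi(F). *)
Lemma Fcentral_series1 F : nilpotent F -> Fcentral_series F 1 = 'Phi(F) :> {set gT}.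
Proof.
by move=> nilF; apply/joing_idPr; rewrite -derg1 der1_sub_Phi_nil.
Qed.

Lemma Fcentral_series_char G i : Fcentral_series 'F(G) i \char G.
Proof.
elim: i => [|i IHi] /=; first exact: Fitting_char.
by rewrite charY ?gFchar_trans ?charR ?Fitting_char.
Qed.

Lemma quotient_Fcentral_series F M i :
    nilpotent F -> F \subset 'N(M) ->
  Fcentral_series (F / M)%G i = Fcentral_series F i / M :> {set _}.
Proof.
move=> nilF nMF; elim: i => [|i IHi] //=; rewrite IHi.
have sVF := normal_sub (Fcentral_series_normal F i).
have nMV := subset_trans sVF nMF.
have nMR : [~: F, Fcentral_series F i] \subset 'N(M).
  by apply: subset_trans nMF; rewrite commg_subl (subset_trans sVF) ?normG.
rewrite quotientY // ?(subset_trans (Phi_sub _)) //.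
by rewrite quotientR // quotient_Phi_nil //; exact: nilpotentS sVF nilF.
Qed.

End FcentralSeries.

Theorem lemma2p2 (gT : finGroupType) (G : {group gT}) :
  [/\ nu 1 G = 'Phi('F(G)) /\ 'Phi('F(G)) \subset 'Phi(G),
      (forall i : nat, nu i G \char G)
    & (forall i j : nat, j <= i -> 1 <= i ->
         nu j (G / nu i G) = nu j G / nu i G)].
Proof.
have nilF := Fitting_nil G.
have nuE i : nu i G = Fcentral_series 'F(G) i by rewrite /nu Fcentral_recE.
split; first by rewrite nuE Fcentral_series1 // Phi_normal_sub ?Fitting_normal.
  by move=> i; rewrite nuE Fcentral_series_char.
move=> i j _ i_gt0; rewrite nuE.
have nsNG := char_normal (Fcentral_series_char G i).
have sNPhi : Fcentral_series 'F(G) i \subset 'Phi(G).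
  rewrite (subset_trans (Fcentral_series_sub _ i_gt0)) // Fcentral_series1 //.
  exact: Phi_normal_sub (Fitting_normal G).
have nNF := subset_trans (Fitting_sub G) (normal_norm nsNG).
rewrite /nu (Fitting_quotient_Phi nsNG sNPhi).
have := Fcentral_recE j (quotient_nil (Fcentral_series 'F(G) i) nilF) => /= ->.
by rewrite quotient_Fcentral_series // Fcentral_recE.
Qed.
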